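(* Let $X$ be a nonempty $T_0$-space and $Y$ a $T_0$-space. If the space $[X,Y]$ is $S^{\ast}$-well-filtered, then $Y$ is $S^{\ast}$-well-filtered.
   Context: $[X,Y]$ denotes the set $\mathrm{TOP}(X,Y)$ of continuous maps $X\to Y$ endowed with the Isbell topology, generated by the subbasic sets $N(H\leftarrow V)=\{f\mid f^{-1}(V)\in H\}$ where $H$ is a Scott open subset of the complete lattice $\mathcal{O}(X)$ of open sets of $X$ and $V$ is open in $Y$. For a space $Z$, ${\uparrow}$ is taken in the specialization order ($x\le y$ iff $x\in cl\{y\}$); $K(Z)$ is the set of nonempty compact saturated (= upper) subsets; a family in $K(Z)$ is filtered if any two members contain a common member. $Z$ is $S^{\ast}$-well-filtered if for every filtered family $\{K_i\mid i\in I\}\subseteq K(Z)$, every $G\in K(Z)$ and every nonempty open $U$, $\bigcap_{i}K_i\cap G\subseteq U$ implies $K_i\cap G\subseteq U$ for some $i$. *)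

From Stdlib Require Import List.



Definition subset {T} (A B : T -> Prop) : Prop := forall x, A x -> B x.

Definition is_topology {T : Type} (O : (T -> Prop) -> Prop) : Prop :=
  O (fun _ => True) /\
  (forall A B, O A -> O B -> O (fun x => A x /\ B x)) /\
  (forall F : (T -> Prop) -> Prop, (forall A, F A -> O A) ->
      O (fun x => exists A, F A /\ A x)).

Record space := Space {
  pt :> Type;
  opn : (pt -> Prop) -> Prop;
  opn_topology : is_topology opn
}.

Section Generic.
Variables (T : Type) (O : (T -> Prop) -> Prop).

Definition T0 : Prop :=
  forall x y : T, (forall U, O U -> (U x <-> U y)) -> x = y.

Definition spec_le (x y : T) : Prop := forall U, O U -> U x -> U y.

Definition saturated (A : T -> Prop) : Prop :=
  forall x y, A x -> spec_le x y -> A y.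

Definition compact (A : T -> Prop) : Prop :=
  forall (I : Type) (U : I -> T -> Prop), (forall i, O (U i)) ->
    subset A (fun x => exists i, U i x) ->
    exists l : list I, subset A (fun x => exists i, In i l /\ U i x).

Definition Kset (A : T -> Prop) : Prop :=
  (exists x, A x) /\ compact A /\ saturated A.

Definition filtered_K (F : (T -> Prop) -> Prop) : Prop :=
  (exists A, F A) /\ (forall A, F A -> Kset A) /\
  (forall A B, F A -> F B -> exists C, F C /\ subset C A /\ subset C B).

Definition S_star_WF : Prop :=
  forall F : (T -> Prop) -> Prop, filtered_K F ->
  forall G : T -> Prop, Kset G ->
  forall U : T -> Prop, O U -> (exists x, U x) ->
  subset (fun x => (forall A, F A -> A x) /\ G x) U ->
  exists A, F A /\ subset (fun x => A x /\ G x) U.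

End Generic.

Section FunctionSpace.
Variables X Y : space.

Definition continuous (f : X -> Y) : Prop :=
  forall V, opn Y V -> opn X (fun x => V (f x)).

Definition cmap := { f : X -> Y | continuous f }.

Definition directed_opens (D : (X -> Prop) -> Prop) : Prop :=
  (exists U, D U) /\ (forall U, D U -> opn X U) /\
  (forall U V, D U -> D V -> exists W, D W /\ subset U W /\ subset V W).

Definition scott_open (H : (X -> Prop) -> Prop) : Prop :=
  (forall U, H U -> opn X U) /\
  (forall U V, H U -> opn X V -> subset U V -> H V) /\
  (forall D, directed_opens D ->
     H (fun x => exists U, D U /\ U x) -> exists U, D U /\ H U).

Definition isbell_subbasic (S : cmap -> Prop) : Prop :=
  exists H V, scott_open H /\ opn Y V /\
    S = (fun f : cmap => H (fun x => V (proj1_sig f x))).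

Definition isbell_open (G : cmap -> Prop) : Prop :=
  forall O : (cmap -> Prop) -> Prop, is_topology O ->
    (forall S, isbell_subbasic S -> O S) -> O G.

End FunctionSpace.

(* [Y] is a retract of [[X,Y]]: sending [y] to the constant map and evaluating
   at a fixed point [x0] of [X] are both continuous for the Isbell topology,
   and evaluation undoes the constant embedding.  S*-well-filteredness passes to
   retracts: the sets [A] of a filtered family in [K(Y)] and [G] are carried to
   the saturations of their images in [[X,Y]], the open set [U] is pulled back
   along evaluation, and monotonicity of evaluation for the specialization order
   brings the conclusion back to [Y]. *)
From Stdlib Require Import Classical FunctionalExtensionality PropExtensionality.

Lemma opn_ext (S : space) (A B : S -> Prop) :
  opn S A -> (forall x, A x <-> B x) -> opn S B.
Proof.
  intros hA hAB.
  replace B with A; [exact hA|].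
  apply functional_extensionality; intro x; apply propositional_extensionality, hAB.
Qed.

Lemma opn_const (S : space) (P : Prop) : opn S (fun _ => P).
Proof.
  destruct (opn_topology S) as [hT [_ hU]].
  destruct (classic P) as [p|np].
  - apply (opn_ext S (fun _ => True)); [exact hT|tauto].
  - apply (opn_ext S (fun x => exists A, (fun _ : S -> Prop => False) A /\ A x)).
    + apply hU; intros A [].
    + intros x; split; [intros [A [[] _]] | intros p; contradiction].
Qed.

Lemma is_topology_preimage (Z : space) (T : Type) (f : Z -> T) :
  is_topology (fun G : T -> Prop => opn Z (fun z => G (f z))).
Proof.
  destruct (opn_topology Z) as [hT [hI hU]].
  split; [exact hT | split; [intros A B hA hB; now apply hI|]].
  intros F hF.
  apply (opn_ext Z (fun z => exists P, (fun P => exists A, F A /\ P = (fun z => A (f z))) P /\ P z)).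
  - apply hU; intros P [A [FA ->]]; auto.
  - intros z; split.
    + intros [P [[A [FA ->]] h]]; eauto.
    + intros [A [FA h]]; exists (fun z => A (f z)); eauto.
Qed.

Definition upc {T : Type} (O : (T -> Prop) -> Prop) (A : T -> Prop) : T -> Prop :=
  fun z => exists a, A a /\ spec_le T O a z.

Definition image {S T : Type} (f : S -> T) (A : S -> Prop) : T -> Prop :=
  fun z => exists y, A y /\ f y = z.

Lemma spec_le_refl (T : Type) (O : (T -> Prop) -> Prop) (x : T) : spec_le T O x x.
Proof. intros U _ h; exact h. Qed.

Lemma saturated_upc (T : Type) (O : (T -> Prop) -> Prop) (A : T -> Prop) :
  saturated T O (upc O A).
Proof.
  intros x y [a [Aa le_ax]] le_xy.
  exists a; split; [exact Aa|].
  intros U hU Ua; apply le_xy, le_ax; assumption.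
Qed.

Lemma compact_upc (T : Type) (O : (T -> Prop) -> Prop) (A : T -> Prop) :
  compact T O A -> compact T O (upc O A).
Proof.
  intros cA I U hU cov.
  destruct (cA I U hU) as [l hl].
  { intros a Aa; apply cov; exists a; split; [exact Aa | apply spec_le_refl]. }
  exists l; intros z [a [Aa le_az]].
  destruct (hl a Aa) as [i [il Uia]].
  exists i; split; [exact il | now apply le_az].
Qed.

Lemma compact_image (S Z : space) (f : S -> Z) (A : S -> Prop) :
  continuous S Z f -> compact S (opn S) A -> compact Z (opn Z) (image f A).
Proof.
  intros cf cA I U hU cov.
  destruct (cA I (fun i y => U i (f y))) as [l hl].
  - intros i; apply cf, hU.
  - intros y Ay; apply cov; now exists y.
  - exists l; intros z [y [Ay <-]]; apply hl, Ay.
Qed.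

Lemma continuous_spec_le (S Z : space) (f : S -> Z) (x y : S) :
  continuous S Z f -> spec_le S (opn S) x y -> spec_le Z (opn Z) (f x) (f y).
Proof. intros cf le_xy V hV; apply (le_xy (fun x => V (f x))), cf, hV. Qed.

Lemma Kset_upc_image (S Z : space) (f : S -> Z) (A : S -> Prop) :
  continuous S Z f -> Kset S (opn S) A -> Kset Z (opn Z) (upc (opn Z) (image f A)).
Proof.
  intros cf [[a Aa] [cA _]].
  split; [|split].
  - exists (f a), (f a); split; [now exists a | apply spec_le_refl].
  - apply compact_upc, compact_image; assumption.
  - apply saturated_upc.
Qed.

Lemma filtered_K_upc_image (S Z : space) (f : S -> Z) (F : (S -> Prop) -> Prop) :
  continuous S Z f -> filtered_K S (opn S) F ->
  filtered_K Z (opn Z) (fun B => exists A, F A /\ B = upc (opn Z) (image f A)).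
Proof.
  intros cf [[A0 FA0] [FK Ffil]].
  split; [|split].
  - exists (upc (opn Z) (image f A0)), A0; auto.
  - intros B [A [FA ->]]; apply Kset_upc_image; auto.
  - intros B1 B2 [A1 [F1 ->]] [A2 [F2 ->]].
    destruct (Ffil A1 A2 F1 F2) as [C [FC [sub1 sub2]]].
    exists (upc (opn Z) (image f C)); split; [now exists C|].
    split; intros z [w [[y [Cy <-]] le]]; exists (f y); split; auto;
      exists y; split; auto.
Qed.

Section Retract.
Variables Y Z : space.
Variables (s : Y -> Z) (r : Z -> Y).
Hypotheses (cs : continuous Y Z s) (cr : continuous Z Y r).
Hypothesis rs : forall y, r (s y) = y.

Lemma retract_upc_image (A : Y -> Prop) (z : Z) :
  saturated Y (opn Y) A -> upc (opn Z) (image s A) z -> A (r z).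
Proof.
  intros sA [w [[y [Ay <-]] le]].
  apply (sA y); [exact Ay|].
  rewrite <- (rs y) at 1; apply continuous_spec_le; assumption.
Qed.

Lemma S_star_WF_retract : S_star_WF Z (opn Z) -> S_star_WF Y (opn Y).
Proof.
  intros HWF F HF G HG U hU [u Uu] sub.
  assert (FK : forall A, F A -> Kset Y (opn Y) A) by apply HF.
  destruct (HWF _ (filtered_K_upc_image Y Z s F cs HF) _ (Kset_upc_image Y Z s G cs HG)
              (fun z => U (r z)) (cr U hU)) as [B [[A [FA ->]] subA]].
  - exists (s u); now rewrite rs.
  - intros z [inF inG]; apply sub; split.
    + intros A FA; apply retract_upc_image; [apply (FK A FA)|].
      apply inF; now exists A.
    + apply retract_upc_image; [apply HG | exact inG].
  - exists A; split; [exact FA|].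
    intros y [Ay Gy]; rewrite <- (rs y); apply subA.
    split; exists (s y); (split; [now exists y | apply spec_le_refl]).
Qed.

End Retract.

Lemma scott_open_nbhd (X : space) (x : X) : scott_open X (fun W => opn X W /\ W x).
Proof.
  split; [|split].
  - intros W [hW _]; exact hW.
  - intros W V [_ Wx] hV sub; split; auto.
  - intros D [_ [hD _]] [_ [W [DW Wx]]]; exists W; auto.
Qed.

Lemma opn_upper_family_const (Z W : space) (H : (W -> Prop) -> Prop) (V : Z -> Prop) :
  opn Z V -> (forall A B, H A -> opn W B -> subset A B -> H B) ->
  opn Z (fun z => H (fun _ => V z)).
Proof.
  intros hV up.
  destruct (classic (H (fun _ => False))) as [h0|h0].
  { apply (opn_ext Z (fun _ => True)); [apply opn_const|].
    intros z; split; [intros _|tauto].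
    apply (up _ _ h0); [apply opn_const | intros w []]. }
  destruct (classic (H (fun _ => True))) as [h1|h1].
  - apply (opn_ext Z V); [exact hV|]; intros z; split.
    + intros Vz; apply (up _ _ h1); [apply opn_const | now intros w].
    + intros h; apply NNPP; intros nVz; apply h0.
      apply (up _ _ h); [apply opn_const | intros w Vz; exact (nVz Vz)].
  - apply (opn_ext Z (fun _ => False)); [apply opn_const|].
    intros z; split; [intros []|intros h; apply h1].
    apply (up _ _ h); [apply opn_const | now intros w].
Qed.

Section IsbellSpace.
Variables X Y : space.

Lemma isbell_topology : is_topology (isbell_open X Y).
Proof.
  split; [|split].
  - intros O tO _; apply tO.
  - intros A B hA hB O tO sub; apply tO; [apply hA|apply hB]; assumption.
  - intros F hF O tO sub; apply tO; intros A FA; now apply hF.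
Qed.

Definition isbell_space : space := Space (cmap X Y) (isbell_open X Y) isbell_topology.

Lemma isbell_open_subbasic (S : cmap X Y -> Prop) :
  isbell_subbasic X Y S -> isbell_open X Y S.
Proof. intros hS O _ sub; now apply sub. Qed.

Definition const_map (y : Y) : cmap X Y :=
  exist (continuous X Y) (fun _ => y) (fun V _ => opn_const X (V y)).

Definition eval_at (x : X) (f : cmap X Y) : Y := proj1_sig f x.

Lemma continuous_const_map : continuous Y isbell_space const_map.
Proof.
  intros G hG.
  apply (hG _ (is_topology_preimage Y _ const_map)).
  intros S [H [V [[_ [up _]] [hV ->]]]].
  exact (opn_upper_family_const Y X H V hV up).
Qed.

Lemma continuous_eval_at (x : X) : continuous isbell_space Y (eval_at x).
Proof.
  intros V hV; apply isbell_open_subbasic.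
  exists (fun W => opn X W /\ W x), V.
  split; [apply scott_open_nbhd | split; [exact hV|]].
  apply functional_extensionality; intros [f cf].
  apply propositional_extensionality; unfold eval_at; simpl.
  split; [intros Vfx; split; [now apply cf | exact Vfx] | tauto].
Qed.

End IsbellSpace.

Theorem mainTheorem18 (X Y : space) :
  inhabited (pt X) -> @T0 (pt X) (opn X) -> @T0 (pt Y) (opn Y) ->
  @S_star_WF (cmap X Y) (isbell_open X Y) -> @S_star_WF (pt Y) (opn Y).
Proof.
  intros [x0] _ _.
  exact (S_star_WF_retract Y (isbell_space X Y) (const_map X Y) (eval_at X Y x0)
           (continuous_const_map X Y) (continuous_eval_at X Y x0) (fun y => eq_refl)).
Qed.
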